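(* For $s,s'\in\mathscr S_+$: (1) $\lfloor s\rfloor\preceq s\preceq\lceil s\rceil$; (2) if $s\preceq s'$, then $\lfloor s\rfloor\preceq\lfloor s'\rfloor$, $\lceil s\rceil\preceq\lceil s'\rceil$, and $\mathfrak d(s)\le\mathfrak d(s')$.
   Context: $\omega=\{0,1,\dots\}$, $[m]=\{1,\dots,m\}$. A finite sign sequence is $s\in\{-,0,+\}^\omega$ with finitely many nonzero entries; $\mathscr S$ their set; $\operatorname{supp}(s)=\{i:s_i\ne0\}$; $\mathscr S_+=\mathscr S\cap\{0,+\}^\omega$. $\mathrm{SC}(t)$ = number of pairs $i<j$ with $\{t_i,t_j\}=\{-,+\}$ and $t_k=0$ for $i<k<j$. $\mathfrak d(s)=\max\{\mathrm{SC}(t):t\in\mathscr S,\ t_i\in\{-,0,s_i\}\ \forall i\}$ for $s\in\mathscr S_+$. $\mathscr S_+^\circ=\{s\in\mathscr S_+:\mathfrak d(s)=\#\operatorname{supp}(s)\}$. Interval decomposition of $s\in\mathscr S_+$: $\operatorname{supp}(s)=X_0\amalg\cdots\amalg X_k$ into intervals with $0\in X_0$ if $0\in\operatorname{supp}(s)$ else $X_0=\emptyset$, $X_i\neq\emptyset$ for $i\in[k]$, $\min X_i-\max X_{i-1}\ge2$ ($\max\emptyset=-\infty$). $\lfloor X_i\rfloor=\{\min X_i-1\}\amalg X_i$ if $\#X_i$ odd, else $X_i$; $\lceil X_i\rceil=X_i\amalg\{\max X_i+1\}$ if $\#X_i$ odd, else $X_i$; $\operatorname{supp}(\lfloor s\rfloor)=X_0\amalg\lfloor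 X_1\rfloor\amalg\cdots\amalg\lfloor X_k\rfloor$, $\operatorname{supp}(\lceil s\rceil)=X_0\amalg\lceil X_1\rceil\amalg\cdots\amalg\lceil X_k\rceil$. On $\mathscr S_+^\circ$: with $\operatorname{supp}(s)=\{d_1>\cdots>d_m\}$, $\operatorname{supp}(s')=\{d'_1>\cdots>d'_{m'}\}$, $s\preceq_0 s'$ iff $m\le m'$ and $d_i\le d'_i$ for $i\in[m]$. On $\mathscr S_+$: $s\preceq s'$ iff $s=s'$, or $s\ne s'$ and $\lceil s\rceil\preceq_0\lfloor s'\rfloor$ (a partial order); $s\prec s'$ means $s\preceq s'$ and $s\ne s'$. *)

From Stdlib Require Import ClassicalEpsilon.
From HB Require Import structures.
From mathcomp Require Import all_boot.
Set Implicit Arguments. Unset Strict Implicit. Unset Printing Implicit Defensive.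

Inductive sign := Sm | Sz | Sp.

Definition sign_eqb (x y : sign) : bool :=
  match x, y with Sm, Sm | Sz, Sz | Sp, Sp => true | _, _ => false end.
Lemma sign_eqP : Equality.axiom sign_eqb.
Proof. by case; case; constructor. Qed.
HB.instance Definition _ := hasDecEq.Build sign sign_eqP.

(* A finite sign sequence is represented by a finite list; entry i is
   [sgn_at s i] (= 0 beyond the end of the list).  Every finitely supported
   element of {-,0,+}^omega is represented (non-uniquely, up to trailing 0s). *)
Definition sseq := seq sign.
Definition sgn_at (s : sseq) (i : nat) : sign := nth Sz s i.

Definition eqS (s s' : sseq) : Prop := forall i, sgn_at s i = sgn_at s' i.

Definition Splus (s : sseq) : bool := all (fun x => x != Sm) s.

Definition insupp (s : sseq) (i : nat) : bool := sgn_at s i != Sz.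

Definition suppl (s : sseq) : seq nat := [seq i <- iota 0 (size s) | insupp s i].

Definition opposite (x y : sign) : bool :=
  ((x == Sm) && (y == Sp)) || ((x == Sp) && (y == Sm)).
Definition SC (t : sseq) : nat :=
  \sum_(j < size t) \sum_(i < j)
     [&& opposite (sgn_at t i) (sgn_at t j)
       & all (fun k => sgn_at t k == Sz) (iota i.+1 (j - i.+1))].

Definition admissible (s t : sseq) : Prop :=
  forall i, sgn_at t i \in [:: Sm; Sz; sgn_at s i].

Definition dd (s : sseq) : nat :=
  epsilon (inhabits 0%N)
    (fun n => (exists t, admissible s t /\ SC t = n) /\
              (forall t, admissible s t -> SC t <= n)).

(* [a, b] is one of the intervals of the interval decomposition of supp(s),
   i.e. a maximal interval of consecutive elements of supp(s). *)
Definition isblock (s : sseq) (a b : nat) : bool :=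
  [&& a <= b, all (insupp s) (iota a (b - a).+1),
      (a == 0) || ~~ insupp s a.-1 & ~~ insupp s b.+1].

(* supp(floor s): add min X_i - 1 for every X_i (i >= 1, i.e. min X_i >= 1)
   of odd cardinality. *)
Definition in_floor (s : sseq) (i : nat) : bool :=
  insupp s i || has (fun b => isblock s i.+1 b && odd (b - i)) (iota 0 (size s)).

(* supp(ceil s): add max X_i + 1 for every X_i (i >= 1, i.e. min X_i >= 1)
   of odd cardinality. *)
Definition in_ceil (s : sseq) (i : nat) : bool :=
  insupp s i ||
  (0 < i) && has (fun a => [&& isblock s a i.-1, 0 < a & odd (i - a)])
                 (iota 0 (size s)).

Definition sfloor (s : sseq) : sseq :=
  [seq (if in_floor s i then Sp else Sz) | i <- iota 0 (size s).+1].
Definition sceil (s : sseq) : sseq :=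
  [seq (if in_ceil s i then Sp else Sz) | i <- iota 0 (size s).+1].

Definition le0 (s s' : sseq) : Prop :=
  let ds := rev (suppl s) in
  let ds' := rev (suppl s') in
  size ds <= size ds' /\ forall i, i < size ds -> nth 0 ds i <= nth 0 ds' i.

Definition preceq (s s' : sseq) : Prop :=
  eqS s s' \/ (~ eqS s s' /\ le0 (sceil s) (sfloor s')).

(* Both [preceq] conditions reduce to majorization of supports: [le0 u v] holds
   iff for every threshold [x], [supp v] has at least as many points [>= x] as
   [supp u].  Counting [supp (sfloor s)] and [supp (sceil s)] run by run of
   [supp s] (the added points sit next to the odd runs, so prefix counts of the
   two differ by a parity correction) shows that [supp s] is contained in
   [supp (sfloor s)], that [sceil] adds nothing to [sfloor s] or to [sceil s],
   that [sfloor s] is majorized by [sceil s], and that both have the same size.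
   The order statements are then chains of these inequalities.  That common
   size is [dd s]: a left-to-right scan bounds the sign changes of any
   admissible sequence by [#|supp (sceil s)|], and alternating signs on
   [supp (sfloor s)] attain [#|supp (sfloor s)|]. *)

From mathcomp Require Import all_boot zify.
From Stdlib Require Import ClassicalEpsilon.
Set Implicit Arguments. Unset Strict Implicit.

Lemma all_iotaP (P : pred nat) a n :
  reflect (forall i, a <= i < a + n -> P i) (all P (iota a n)).
Proof.
apply: (iffP allP) => H i; first by move=> Hi; apply: H; rewrite mem_iota.
by rewrite mem_iota => Hi; apply: H.
Qed.

Lemma has_iota_ge (P : pred nat) m n : (forall b, P b -> b < m) -> m <= n ->
  has P (iota 0 n) = has P (iota 0 m).
Proof.
move=> HP Hmn; rewrite -(subnKC Hmn) iotaD has_cat.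
suff -> : has P (iota (0 + m) (n - m)) = false by rewrite orbF.
apply/negbTE/hasPn => b; rewrite mem_iota add0n => /andP [Hb _].
by apply/negP => /HP; lia.
Qed.

(** * Runs of the support *)

Section Runs.
Variable s : sseq.

Lemma insupp_lt_size i : insupp s i -> i < size s.
Proof. by rewrite /insupp /sgn_at; case: ltnP => // H; rewrite nth_default. Qed.

(* [run_len j] is the length of the run of support points ending at [j - 1]. *)
Fixpoint run_len (j : nat) : nat :=
  if j is j'.+1 then (if insupp s j' then (run_len j').+1 else 0) else 0.

Lemma run_len_le j : run_len j <= j.
Proof. by elim: j => //= j IH; case: ifP. Qed.

Lemma run_len_insupp j i : j - run_len j <= i < j -> insupp s i.
Proof.
elim: j => [|j IH] /=; first by lia.
case: ifP => Hj; last by lia.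
by case: (ltnP i j) => [Hij Hi|Hji Hi]; [apply: IH; lia | have -> : i = j by lia].
Qed.

Lemma run_len_full j : run_len j = j -> forall i, i < j -> insupp s i.
Proof. by move=> Hj i Hi; apply: (@run_len_insupp j); lia. Qed.

Lemma run_len_from c j : c < j -> ~~ insupp s c ->
  (forall i, c < i < j -> insupp s i) -> run_len j = j - c.+1.
Proof.
elim: j => [|j IH] // Hcj Hc Hrun /=.
case: (ltnP c j) => H; last first.
  have E : c = j by lia.
  by rewrite -E (negbTE Hc) subnn.
rewrite Hrun; last by lia.
rewrite IH //; [lia | by move=> i Hi; apply: Hrun; lia].
Qed.

Lemma run_len_split j : run_len j < j ->
  let c := j - (run_len j).+1 in
  [/\ j = c.+1 + run_len j, ~~ insupp s c
    & forall i, c < i < c.+1 + run_len j -> insupp s i].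
Proof.
move=> Hlt; have Hle := run_len_le j.
have Hc : ~~ insupp s (j - (run_len j).+1).
  elim: j Hlt {Hle} => [|j IH] //=; case: ifP => Hj; last by rewrite subn1 /= Hj.
  by rewrite subSS => /IH.
split=> //; first by lia.
by move=> i Hi; apply: (@run_len_insupp j); lia.
Qed.

Lemma isblockP a b : reflect
  [/\ a <= b, forall i, a <= i <= b -> insupp s i,
      (a == 0) || ~~ insupp s a.-1 & ~~ insupp s b.+1] (isblock s a b).
Proof.
apply: (iffP and4P) => -[Hab Hall Ha Hb]; split=> //.
- by move=> i Hi; apply: (all_iotaP _ _ _ Hall); lia.
- by apply/all_iotaP => i Hi; apply: Hall; lia.
Qed.

Lemma in_ceil_notin j : ~~ insupp s j ->
  in_ceil s j = odd (run_len j) && (run_len j < j).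
Proof.
move=> Hj; rewrite /in_ceil (negbTE Hj) /=; have Hle := run_len_le j.
apply/idP/idP.
  case/andP=> Hj0 /hasP [a _ /and3P [/isblockP [Hab Hrun Ha _] Ha0 Hodd]].
  have Hna : ~~ insupp s a.-1 by move: Ha; case: (a) Ha0.
  rewrite (@run_len_from a.-1) //; first by rewrite prednK // Hodd; lia.
  - lia.
  - by move=> i Hi; apply: Hrun; lia.
case/andP=> Hodd Hlt; have [Ej Hc Hrun] := run_len_split Hlt.
have Hl0 : 0 < run_len j by case: (run_len j) Hodd.
apply/andP; split; first by lia.
apply/hasP; exists (j - run_len j).
  by rewrite mem_iota add0n insupp_lt_size // (@run_len_insupp j); lia.
apply/and3P; split; last by have -> : j - (j - run_len j) = run_len j by lia.
- apply/isblockP; split; first by lia.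
  + by move=> i Hi; apply: (@run_len_insupp j); lia.
  + have -> : (j - run_len j).-1 = j - (run_len j).+1 by lia.
    by rewrite Hc orbT.
  + by rewrite prednK ?Hj //; lia.
- lia.
Qed.

Lemma in_floor_before_run c l : ~~ insupp s c ->
  (forall i, c < i < c.+1 + l -> insupp s i) -> ~~ insupp s (c.+1 + l) ->
  in_floor s c = odd l.
Proof.
move=> Hc Hrun Hend; rewrite /in_floor (negbTE Hc) /=.
apply/hasP/idP => [[b _ /andP [/isblockP [Hcb Hb _ Hb1] Hodd]] | Hodd].
  suff E : b = c + l by rewrite E addKn in Hodd.
  apply/eqP; rewrite eqn_leq; apply/andP; split.
    by rewrite leqNgt; apply/negP => Hlt; move/negP: Hend; apply; apply: Hb; lia.
  by rewrite leqNgt; apply/negP => Hlt; move/negP: Hb1; apply; apply: Hrun; lia.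
have Hl0 : 0 < l by case: l Hodd {Hrun Hend}.
exists (c + l).
  by rewrite mem_iota add0n insupp_lt_size // Hrun; lia.
rewrite addKn Hodd andbT; apply/isblockP; split; first by lia.
- by move=> i Hi; apply: Hrun; lia.
- by [].
- by rewrite -addSn.
Qed.

Lemma insupp_in_floor i : insupp s i -> in_floor s i.
Proof. by rewrite /in_floor => ->. Qed.

Lemma insupp_in_ceil i : insupp s i -> in_ceil s i.
Proof. by rewrite /in_ceil => ->. Qed.

Lemma in_floor_le_size i : in_floor s i -> i <= size s.
Proof.
case/orP => [/insupp_lt_size|/hasP [b Hb /andP [/isblockP [Hib _ _ _] _]]]; first lia.
by move: Hb; rewrite mem_iota; lia.
Qed.

Lemma in_ceil_le_size i : in_ceil s i -> i <= size s.
Proof.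
case/orP => [/insupp_lt_size|]; first lia.
case/andP => Hi /hasP [a _ /and3P [/isblockP [Hai Hrun _ _] _ _]].
have /insupp_lt_size : insupp s i.-1 by apply: Hrun; lia.
lia.
Qed.

End Runs.

Lemma sgn_at_indicator (f : pred nat) n i : (forall i, f i -> i < n) ->
  sgn_at [seq (if f i then Sp else Sz) | i <- iota 0 n] i = if f i then Sp else Sz.
Proof.
move=> Hf; rewrite /sgn_at; case: (ltnP i n) => Hi.
  by rewrite (nth_map 0) ?size_iota // nth_iota.
rewrite nth_default ?size_map ?size_iota //.
by case Ei: (f i) => //; have := Hf _ Ei; lia.
Qed.

Lemma sgn_at_sfloor s i : sgn_at (sfloor s) i = if in_floor s i then Sp else Sz.
Proof. by rewrite sgn_at_indicator // => k /in_floor_le_size. Qed.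

Lemma sgn_at_sceil s i : sgn_at (sceil s) i = if in_ceil s i then Sp else Sz.
Proof. by rewrite sgn_at_indicator // => k /in_ceil_le_size. Qed.

Lemma insupp_sfloor s i : insupp (sfloor s) i = in_floor s i.
Proof. by rewrite /insupp sgn_at_sfloor; case: in_floor. Qed.

Lemma insupp_sceil s i : insupp (sceil s) i = in_ceil s i.
Proof. by rewrite /insupp sgn_at_sceil; case: in_ceil. Qed.

(** * Prefix counts of the floor and ceiling supports *)

Definition pcount (f : pred nat) n := count f (iota 0 n).

Lemma pcountS (f : pred nat) n : pcount f n.+1 = pcount f n + f n.
Proof. by rewrite /pcount -addn1 iotaD count_cat /= addn0. Qed.

Lemma pcount_all (f : pred nat) n : (forall i, i < n -> f i) -> pcount f n = n.
Proof.
move=> Hf; rewrite /pcount (eq_in_count (a2 := predT)) ?count_predT ?size_iota //.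
by move=> i; rewrite mem_iota => /andP [_ /Hf].
Qed.

Lemma pcount_split (f : pred nat) m n : m <= n ->
  pcount f n = pcount f m + count f (iota m (n - m)).
Proof. by move=> Hmn; rewrite /pcount -{1}(subnKC Hmn) iotaD count_cat. Qed.

Lemma pcount_le (f : pred nat) m n : m <= n -> pcount f m <= pcount f n.
Proof. by move=> Hmn; rewrite (pcount_split f Hmn) leq_addr. Qed.

Lemma pcount_none (f : pred nat) m n : m <= n -> (forall i, m <= i < n -> ~~ f i) ->
  pcount f n = pcount f m.
Proof.
move=> Hmn Hf; rewrite (pcount_split f Hmn) (eq_in_count (a2 := pred0)).
  by rewrite count_pred0 addn0.
by move=> i; rewrite mem_iota subnKC // => /Hf /negbTE.
Qed.

Lemma pcount_run (f : pred nat) c l : (forall i, c < i < c.+1 + l -> f i) ->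
  pcount f (c.+1 + l) = pcount f c + f c + l.
Proof.
move=> Hf; rewrite /pcount iotaD count_cat -/(pcount f c.+1) pcountS; congr (_ + _).
rewrite (eq_in_count (a2 := predT)) ?count_predT ?size_iota //.
by move=> i; rewrite mem_iota => /Hf.
Qed.

Section FloorCeilCounts.
Variable s : sseq.

(* An odd run of [supp s] not starting at 0 gets one extra point of [sfloor s]
   just before it and one of [sceil s] just after it. *)
Lemma pcount_floor_ceil j : ~~ insupp s j ->
  pcount (in_floor s) j = pcount (in_ceil s) j + in_ceil s j.
Proof.
elim/ltn_ind: j => j IH Hj; rewrite in_ceil_notin //.
have [Hlt|Hfull] := ltnP (run_len s j) j; last first.
  have Hrun : forall i, i < j -> insupp s i.
    by apply: run_len_full; have := run_len_le s j; lia.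
  rewrite andbF addn0 !pcount_all // => i /Hrun.
    exact: insupp_in_ceil.
  exact: insupp_in_floor.
have [Ej Hc Hrun] := run_len_split Hlt; set c := j - _ in Ej Hc Hrun.
have HF : in_floor s c = odd (run_len s j) by apply: in_floor_before_run; rewrite // -Ej.
have HrunF i : c < i < c.+1 + run_len s j -> in_floor s i by move/Hrun/insupp_in_floor.
have HrunC i : c < i < c.+1 + run_len s j -> in_ceil s i by move/Hrun/insupp_in_ceil.
rewrite Ej (pcount_run HrunF) (pcount_run HrunC).
rewrite -Ej (IH c _ Hc) ?HF ?andbT; lia.
Qed.

Lemma odd_pcount_floor j c : ~~ insupp s j -> c <= j -> ~~ insupp s c ->
  odd (pcount (in_floor s) j) = odd (pcount (in_floor s) c).
Proof.
elim/ltn_ind: j c => j IH c' Hj Hc'j Hc'.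
have [->|Hc'lt] := eqVneq c' j; first by [].
have [Hlt|Hfull] := ltnP (run_len s j) j; last first.
  have : insupp s c'.
    by apply: (@run_len_full s j); [have := run_len_le s j | ]; lia.
  by rewrite (negbTE Hc').
have [Ej Hc Hrun] := run_len_split Hlt; set c := j - _ in Ej Hc Hrun.
have Hc'c : c' <= c.
  by rewrite leqNgt; apply/negP => H; move/negP: Hc'; apply; apply: Hrun; lia.
have HF : in_floor s c = odd (run_len s j) by apply: in_floor_before_run; rewrite // -Ej.
have HrunF i : c < i < c.+1 + run_len s j -> in_floor s i by move/Hrun/insupp_in_floor.
rewrite Ej (pcount_run HrunF) HF -(IH c _ c') //; last by lia.
(* the run and the point before it contribute [odd l + l], an even number *)
by rewrite -addnA oddD [odd (_ + run_len _ _)]oddD oddb addbb addbF.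
Qed.

Lemma pcount_ceil_le_floor x : pcount (in_ceil s) x <= pcount (in_floor s) x.
Proof.
have [Hx|Hx] := boolP (insupp s x); last by rewrite pcount_floor_ceil // leq_addr.
have [Hlt|Hfull] := ltnP (run_len s x) x; last first.
  have Hrun : forall i, i < x -> insupp s i.
    by apply: run_len_full; have := run_len_le s x; lia.
  rewrite !pcount_all // => i /Hrun; [exact: insupp_in_floor | exact: insupp_in_ceil].
have [Ex Hc Hrun] := run_len_split Hlt; set c := x - _ in Ex Hc Hrun.
have HrunF i : c < i < c.+1 + run_len s x -> in_floor s i by move/Hrun/insupp_in_floor.
have HrunC i : c < i < c.+1 + run_len s x -> in_ceil s i by move/Hrun/insupp_in_ceil.
rewrite Ex (pcount_run HrunF) (pcount_run HrunC) (pcount_floor_ceil Hc); lia.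
Qed.

Lemma in_ceil_sfloor i : in_ceil (sfloor s) i -> in_floor s i.
Proof.
have [//|HF] := boolP (in_floor s i).
have Hi : ~~ insupp (sfloor s) i by rewrite insupp_sfloor.
rewrite in_ceil_notin // => /andP [Hodd Hlt].
have [Ei Hc Hrun] := run_len_split Hlt; set c := i - _ in Ei Hc Hrun.
rewrite insupp_sfloor in Hc.
have HrunF k : c < k < c.+1 + run_len (sfloor s) i -> in_floor s k.
  by move/Hrun; rewrite insupp_sfloor.
have Hsi : ~~ insupp s i by apply: contra HF; apply: insupp_in_floor.
have Hsc : ~~ insupp s c by apply: contra Hc; apply: insupp_in_floor.
have Hci : c <= i by lia.
(* an odd run of [supp (sfloor s)] between [c] and [i] would change the parity *)
have := odd_pcount_floor Hsi Hci Hsc.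
rewrite Ei (pcount_run HrunF) (negbTE Hc) addn0 oddD Hodd.
by case: odd.
Qed.

Lemma in_ceil_sceil i : in_ceil (sceil s) i -> in_ceil s i.
Proof.
have [//|HC] := boolP (in_ceil s i).
have Hi : ~~ insupp (sceil s) i by rewrite insupp_sceil.
rewrite in_ceil_notin // => /andP [Hodd Hlt].
have [Ei Hc Hrun] := run_len_split Hlt; set c := i - _ in Ei Hc Hrun.
rewrite insupp_sceil in Hc.
have HrunC k : c < k < c.+1 + run_len (sceil s) i -> in_ceil s k.
  by move/Hrun; rewrite insupp_sceil.
have Hsi : ~~ insupp s i by apply: contra HC; apply: insupp_in_ceil.
have Hsc : ~~ insupp s c by apply: contra Hc; apply: insupp_in_ceil.
have Hci : c <= i by lia.
have := odd_pcount_floor Hsi Hci Hsc.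
rewrite !pcount_floor_ceil // (negbTE HC) (negbTE Hc) !addn0.
rewrite Ei (pcount_run HrunC) (negbTE Hc) addn0 oddD Hodd.
by case: odd.
Qed.

End FloorCeilCounts.

(** * Majorization of supports *)

Lemma geq_trans : transitive geq.
Proof. by move=> a b c /= Hab Hca; apply: leq_trans Hab. Qed.

Lemma sorted_geq_nth_count (D : seq nat) : sorted geq D ->
  forall x i, i < size D -> (x <= nth 0 D i) = (i < count (leq x) D).
Proof.
elim: D => [|d D IH] //= HD x i Hi.
have HDsorted : sorted geq D := path_sorted HD.
have Hmax : all (geq d) D := order_path_min geq_trans HD.
have [Hxd|Hdx] := leqP x d.
  by case: i Hi => [|i] Hi //=; rewrite add1n ltnS IH.
have -> : count (leq x) D = 0.
  apply/eqP; rewrite -leqn0 leqNgt -has_count; apply/hasP => -[y Hy Hxy].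
  by move/allP: Hmax => /(_ y Hy) /= Hyd; move: Hdx; rewrite ltnNge (leq_trans Hxy Hyd).
rewrite ltn0; case: i Hi => [|i] Hi /=; first by rewrite leqNgt Hdx.
apply/negbTE; rewrite -ltnNge; apply: leq_ltn_trans Hdx.
by move/allP: Hmax; apply; rewrite mem_nth.
Qed.

Definition nsupp_ge (u : sseq) x := count (leq x) (suppl u).

Lemma rev_suppl_sorted u : sorted geq (rev (suppl u)).
Proof.
rewrite rev_sorted; apply: (sub_sorted (e := ltn)); first by move=> a b /ltnW.
apply: sorted_filter; [exact: ltn_trans | exact: iota_ltn_sorted].
Qed.

Lemma le0P u v : le0 u v <-> forall x, nsupp_ge u x <= nsupp_ge v x.
Proof.
rewrite /le0 !size_rev /nsupp_ge.
have Hu := sorted_geq_nth_count (rev_suppl_sorted u).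
have Hv := sorted_geq_nth_count (rev_suppl_sorted v).
split=> [[Hsize Hnth] x | H].
  rewrite -!(count_rev _ (suppl _)).
  case Ek: (count _ (rev (suppl u))) => [//|k].
  have Hk : k < size (suppl u).
    by have := count_size (leq x) (rev (suppl u)); rewrite Ek size_rev.
  have Hxu : x <= nth 0 (rev (suppl u)) k by rewrite Hu ?Ek ?size_rev.
  rewrite -Hv ?size_rev; last by lia.
  exact: leq_trans Hxu (Hnth _ Hk).
split; first by have := H 0; rewrite !(eq_count (a2 := predT)) // !count_predT.
move=> i Hi; set x := nth 0 _ i.
have Hiu : i < count (leq x) (suppl u) by rewrite -count_rev -Hu ?size_rev.
have Hiv : i < count (leq x) (suppl v) := leq_trans Hiu (H x).
by rewrite Hv ?count_rev // size_rev (leq_trans Hiv (count_size _ _)).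
Qed.

Lemma nsupp_ge_count u x N : size u <= N ->
  nsupp_ge u x = count (fun i => insupp u i && (x <= i)) (iota 0 N).
Proof.
move=> HN; rewrite /nsupp_ge /suppl count_filter -(subnKC HN) iotaD count_cat.
rewrite (@eq_in_count _ _ pred0 (iota (0 + size u) _)) ?count_pred0 ?addn0.
  by apply: eq_count => i /=; rewrite andbC.
move=> i; rewrite mem_iota add0n => /andP [Hi _] /=.
by rewrite /insupp /sgn_at nth_default.
Qed.

Lemma nsupp_ge_subset u v : (forall i, insupp u i -> insupp v i) ->
  forall x, nsupp_ge u x <= nsupp_ge v x.
Proof.
move=> Huv x; rewrite (@nsupp_ge_count u x (size u + size v)) ?leq_addr //.
rewrite (@nsupp_ge_count v x (size u + size v)) ?leq_addl //.
by apply: sub_count => i /andP [/Huv -> ->].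
Qed.

Lemma count_iota_ge (f : pred nat) x N :
  count (fun i => f i && (x <= i)) (iota 0 N) = pcount f N - pcount f x.
Proof.
have [HxN|HNx] := leqP x N; last first.
  rewrite (eq_in_count (a2 := pred0)) ?count_pred0; last first.
    move=> i; rewrite mem_iota add0n => /andP [_ Hi] /=.
    by rewrite leqNgt (ltn_trans Hi HNx) andbF.
  by apply/esym/eqP; rewrite subn_eq0 pcount_le // ltnW.
rewrite (pcount_split f HxN) addKn /pcount -{1}(subnKC HxN) iotaD count_cat add0n.
rewrite (eq_in_count (a2 := pred0)) ?count_pred0 ?add0n; last first.
  by move=> i; rewrite mem_iota add0n => /andP [_ Hi] /=; rewrite leqNgt Hi andbF.
by apply: eq_in_count => i; rewrite mem_iota => /andP [Hi _]; rewrite Hi andbT.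
Qed.

Lemma nsupp_ge_pcount_floor s x :
  nsupp_ge (sfloor s) x = pcount (in_floor s) (size s).+1 - pcount (in_floor s) x.
Proof.
rewrite (@nsupp_ge_count _ x (size s).+1) ?size_map ?size_iota // -count_iota_ge.
by apply: eq_count => i; rewrite insupp_sfloor.
Qed.

Lemma nsupp_ge_pcount_ceil s x :
  nsupp_ge (sceil s) x = pcount (in_ceil s) (size s).+1 - pcount (in_ceil s) x.
Proof.
rewrite (@nsupp_ge_count _ x (size s).+1) ?size_map ?size_iota // -count_iota_ge.
by apply: eq_count => i; rewrite insupp_sceil.
Qed.

Lemma pcount_floor_ceil_total s :
  pcount (in_floor s) (size s).+1 = pcount (in_ceil s) (size s).+1.
Proof.
have Hout : ~~ insupp s (size s).+1 by apply/negP => /insupp_lt_size; lia.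
have Hceil : in_ceil s (size s).+1 = false by apply/negP => /in_ceil_le_size; lia.
by rewrite pcount_floor_ceil // Hceil addn0.
Qed.

Lemma nsupp_ge_floor_ceil s x : nsupp_ge (sfloor s) x <= nsupp_ge (sceil s) x.
Proof.
rewrite nsupp_ge_pcount_floor nsupp_ge_pcount_ceil pcount_floor_ceil_total.
exact/leq_sub2l/pcount_ceil_le_floor.
Qed.

Lemma nsupp_ge0_sfloor_sceil s : nsupp_ge (sfloor s) 0 = nsupp_ge (sceil s) 0.
Proof. by rewrite nsupp_ge_pcount_floor nsupp_ge_pcount_ceil pcount_floor_ceil_total. Qed.

Lemma nsupp_ge_sfloor u x : nsupp_ge u x <= nsupp_ge (sfloor u) x.
Proof. by apply: nsupp_ge_subset => i; rewrite insupp_sfloor; apply: insupp_in_floor. Qed.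

Lemma nsupp_ge_sceil_sfloor u x : nsupp_ge (sceil (sfloor u)) x <= nsupp_ge (sfloor u) x.
Proof.
by apply: nsupp_ge_subset => i; rewrite insupp_sceil insupp_sfloor; apply: in_ceil_sfloor.
Qed.

Lemma nsupp_ge_sceil_sceil u x : nsupp_ge (sceil (sceil u)) x <= nsupp_ge (sceil u) x.
Proof. by apply: nsupp_ge_subset => i; rewrite !insupp_sceil; apply: in_ceil_sceil. Qed.

(** * Sign changes *)

Fixpoint last_nz (t : sseq) (j : nat) : sign :=
  if j is j'.+1 then (if sgn_at t j' != Sz then sgn_at t j' else last_nz t j') else Sz.

Lemma sum_changes_at t x j :
  \sum_(i < j) [&& opposite (sgn_at t i) x
                 & all (fun k => sgn_at t k == Sz) (iota i.+1 (j - i.+1))]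
  = opposite (last_nz t j) x.
Proof.
elim: j => [|j IH]; first by rewrite big_ord0.
rewrite big_ord_recr /= subnn /= andbT.
have Esplit (i : 'I_j) :
    all (fun k => sgn_at t k == Sz) (iota i.+1 (j.+1 - i.+1))
  = all (fun k => sgn_at t k == Sz) (iota i.+1 (j - i.+1)) && (sgn_at t j == Sz).
  have Hi := ltn_ord i.
  have -> : j.+1 - i.+1 = (j - i.+1) + 1 by lia.
  by rewrite iotaD all_cat subnKC // all_seq1.
under eq_bigr => i _ do rewrite Esplit andbA.
case: eqP => Hz; last by rewrite big1 ?add0n // => i _; rewrite andbF.
by under eq_bigr => i _ do rewrite andbT; rewrite IH Hz addn0.
Qed.

Definition nchanges t n := \sum_(j < n) opposite (last_nz t j) (sgn_at t j).

Lemma SC_nchanges t : SC t = nchanges t (size t).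
Proof. by apply: eq_bigr => j _; rewrite sum_changes_at. Qed.

Lemma nchangesS t n :
  nchanges t n.+1 = nchanges t n + opposite (last_nz t n) (sgn_at t n).
Proof. by rewrite /nchanges big_ord_recr. Qed.

Lemma nchanges_le t m n : m <= n -> nchanges t m <= nchanges t n.
Proof.
move=> Hmn; rewrite -(subnKC Hmn); elim: (n - m) => [|k IH]; first by rewrite addn0.
by rewrite addnS nchangesS (leq_trans IH) ?leq_addr.
Qed.

Lemma nchanges_last_nz_Sz t j : last_nz t j = Sz -> nchanges t j = 0.
Proof.
elim: j => [|j IH]; first by rewrite /nchanges big_ord0.
rewrite /= nchangesS; case: (sgn_at t j =P Sz) => [Htj /= Hlast|Htj /= Hlast].
  by rewrite IH // Htj Hlast.
by rewrite Hlast in Htj.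
Qed.

Lemma admissible_Sp s t j : admissible s t -> sgn_at t j = Sp -> insupp s j.
Proof. by move=> /(_ j); rewrite !inE /insupp => + Htj; rewrite Htj; case: sgn_at. Qed.

(* Invariant of a left-to-right scan of [t]: the changes seen so far, plus one
   if the last nonzero sign is [+] (a later [-] may still add a change), are
   bounded by the points of [supp (sceil s)] seen so far.  The corrections
   depend on the run of [supp s] ending at [j - 1]: a [+] at [j - 1] may be
   followed by the point that [sceil] adds after an odd run, while a run of
   odd length, or starting at 0, that does not end with [+] has wasted one
   point. *)
Definition scan_bound s t j : Prop :=
  if (0 < j) && (sgn_at t j.-1 == Sp) then
    nchanges t j + (last_nz t j == Sp)
      <= pcount (in_ceil s) j + (odd (run_len s j) && (run_len s j < j))
  else
    nchanges t j + (last_nz t j == Sp)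
      + ((0 < run_len s j) && (odd (run_len s j) || (run_len s j == j)))
      <= pcount (in_ceil s) j.

Lemma admissible_scan_bound s t : admissible s t -> forall j, scan_bound s t j.
Proof.
move=> Hadm; elim=> [|j IH]; first by rewrite /scan_bound /nchanges big_ord0.
have Hle := run_len_le s j.
have Hrun : run_len s j.+1 = if insupp s j then (run_len s j).+1 else 0 by [].
have Hlast : (0 < j) && (sgn_at t j.-1 == Sp) -> last_nz t j = Sp.
  by case: j {IH Hle Hrun} => [|k] //= /eqP ->.
have Hz := @nchanges_last_nz_Sz t j.
have Hceil : in_ceil s j = if insupp s j then true
                           else odd (run_len s j) && (run_len s j < j).
  by case Hj: (insupp s j); [rewrite insupp_in_ceil | rewrite in_ceil_notin ?Hj].
have Hadj := @admissible_Sp s t j Hadm.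
have Hj0 : (last_nz t j == Sm) ==> (0 < j) by case: (j) => //= k; rewrite implybT.
have Hodd0 : odd (run_len s j) -> 0 < run_len s j by case: (run_len s j).
move: IH; rewrite /scan_bound nchangesS pcountS Hrun Hceil /=.
set o := (0 < j) && _ in Hlast *.
case Htj: (sgn_at t j) Hadj => Hadj; case Hsj: (insupp s j);
  case Hla: (last_nz t j) Hlast Hz => Hlast Hz; case Ho: o Hlast => Hlast //=;
  try (rewrite Hz; [|by []]); try (by move: (Hadj erefl); rewrite Hsj);
  try (by have := Hlast erefl);
  rewrite ?oddS; move: Hodd0 Hj0; rewrite Hla; case: (odd (run_len s j));
  case: (ltngtP (run_len s j) j) => /=; lia.
Qed.

Lemma SC_le_pcount_ceil s t : admissible s t -> SC t <= pcount (in_ceil s) (size s).+1.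
Proof.
move=> Hadm; set M := (size t + size s).+1.
have := admissible_scan_bound Hadm M; rewrite /scan_bound.
have -> : sgn_at t M.-1 = Sz by rewrite /sgn_at nth_default //= leq_addr.
rewrite andbF => Hbound.
rewrite SC_nchanges (leq_trans (nchanges_le t (_ : size t <= M))) ?leqW ?leq_addr //.
rewrite -(@pcount_none (in_ceil s) (size s).+1 M) ?ltnS ?leq_addl //; first by lia.
by move=> i /andP [Hi _]; apply/negP => /in_ceil_le_size; lia.
Qed.

(* Alternating signs on [supp (sfloor s)] and the extra point [N], ending with
   [-] at [N]; by the parity of the counts, every [+] lies in [supp s]. *)
Definition alt_witness s : sseq :=
  let N := (size s).+1 in
  [seq if in_floor s i || (i == N) then
         (if odd (pcount (in_floor s) N + pcount (in_floor s) i) then Sp else Sm)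
       else Sz | i <- iota 0 N.+1].

Lemma sgn_at_alt_witness s i : let N := (size s).+1 in
  sgn_at (alt_witness s) i =
    if in_floor s i || (i == N) then
      (if odd (pcount (in_floor s) N + pcount (in_floor s) i) then Sp else Sm)
    else Sz.
Proof.
move=> N; rewrite /sgn_at; case: (ltnP i N.+1) => Hi.
  by rewrite (nth_map 0) ?size_iota // nth_iota.
rewrite nth_default ?size_map ?size_iota // ifF //.
apply/negbTE; rewrite negb_or; apply/andP; split; last by rewrite neq_ltn; lia.
by apply/negP => /in_floor_le_size; lia.
Qed.

Lemma alt_witness_admissible s : Splus s -> admissible s (alt_witness s).
Proof.
move=> Hs i; rewrite sgn_at_alt_witness /=.
set N := (size s).+1; set K := pcount (in_floor s) N.
case: ifP => [/orP HF|_]; last by rewrite !inE eqxx orbT.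
case: ifP => Hodd; last by rewrite !inE eqxx.
have HN : ~~ insupp s N by apply/negP => /insupp_lt_size; lia.
have HsI : insupp s i.
  apply: contraT => Hi.
  have HiN : i <= N by case: HF => [/in_floor_le_size|/eqP ->]; lia.
  by move: Hodd; rewrite oddD -(odd_pcount_floor HN HiN Hi) addbb.
have : sgn_at s i != Sm by move/all_nthP: Hs; apply; exact: insupp_lt_size.
by move: HsI; rewrite /insupp !inE; case: sgn_at.
Qed.

Lemma opposite_Sz x : opposite x Sz = false. Proof. by case: x. Qed.

Lemma SC_alt_witness s : SC (alt_witness s) = pcount (in_floor s) (size s).+1.
Proof.
set N := (size s).+1; set K := pcount (in_floor s) N.
have HFN : in_floor s N = false by apply/negP => /in_floor_le_size; rewrite /N; lia.
have Hscan j : j <= N ->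
    nchanges (alt_witness s) j = (pcount (in_floor s) j).-1 /\
    last_nz (alt_witness s) j =
      if pcount (in_floor s) j == 0 then Sz
      else if odd (K + pcount (in_floor s) j) then Sm else Sp.
  elim: j => [|j IH] Hj; first by rewrite /nchanges big_ord0.
  have [IHn IHl] := IH (ltnW Hj).
  rewrite nchangesS /= pcountS sgn_at_alt_witness -/N -/K IHn IHl.
  rewrite (_ : (j == N) = false) ?orbF; last by apply/negbTE; rewrite neq_ltn Hj.
  case: (in_floor s j) => /=; last by rewrite !addn0 opposite_Sz addn0.
  rewrite addn1 addnS /=.
  by case: (odd (K + _)) => /=; case: eqP => HP /=; split => //; lia.
rewrite SC_nchanges /alt_witness size_map size_iota -/N -/K nchangesS.
have [Hn Hl] := Hscan N (leqnn _).
rewrite Hn Hl sgn_at_alt_witness -/N -/K eqxx orbT -/K oddD addbb.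
by case: eqP => HK0 /=; [rewrite HK0 | lia].
Qed.

Lemma dd_eq s n : (exists t, admissible s t /\ SC t = n) ->
  (forall t, admissible s t -> SC t <= n) -> dd s = n.
Proof.
move=> Hex Hmax.
have Hn : exists m, (exists t, admissible s t /\ SC t = m) /\
                    (forall t, admissible s t -> SC t <= m) by exists n.
rewrite /dd; have [[t [Ht <-]] Hdd] := epsilon_spec (inhabits 0) _ Hn.
apply/eqP; rewrite eqn_leq Hmax //.
by case: Hex => t' [Ht' <-]; apply: Hdd.
Qed.

Lemma dd_nsupp_sfloor s : Splus s -> dd s = nsupp_ge (sfloor s) 0.
Proof.
move=> Hs; rewrite nsupp_ge_pcount_floor subn0; apply: dd_eq.
  exists (alt_witness s); rewrite SC_alt_witness.
  by split=> //; apply: alt_witness_admissible.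
by move=> t /SC_le_pcount_ceil; rewrite pcount_floor_ceil_total.
Qed.

(** * Sequences equal up to trailing zeros *)

Section EqS.
Variables s s' : sseq.
Hypothesis Hss' : eqS s s'.

Lemma insupp_eqS : insupp s =1 insupp s'.
Proof. by move=> i; rewrite /insupp Hss'. Qed.

Lemma isblock_eqS a b : isblock s a b = isblock s' a b.
Proof. by rewrite /isblock (eq_all insupp_eqS) !insupp_eqS. Qed.

Lemma in_floor_eqS : in_floor s =1 in_floor s'.
Proof.
have Hlt u i b : isblock u i.+1 b && odd (b - i) -> b < size u.
  by case/andP => /isblockP [Hib Hrun _ _] _; apply: insupp_lt_size; apply: Hrun; lia.
move=> i; rewrite /in_floor insupp_eqS.
rewrite -(has_iota_ge (Hlt s i) (leq_addr (size s') _)).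
rewrite -(has_iota_ge (Hlt s' i) (leq_addl (size s) _)).
by congr (_ || _); apply: eq_has => b; rewrite isblock_eqS.
Qed.

Lemma in_ceil_eqS : in_ceil s =1 in_ceil s'.
Proof.
have Hlt u i a : [&& isblock u a i.-1, 0 < a & odd (i - a)] -> a < size u.
  by case/and3P => /isblockP [Hai Hrun _ _] _ _; apply: insupp_lt_size; apply: Hrun; lia.
move=> i; rewrite /in_ceil insupp_eqS.
rewrite -(has_iota_ge (Hlt s i) (leq_addr (size s') _)).
rewrite -(has_iota_ge (Hlt s' i) (leq_addl (size s) _)).
by congr (_ || _ && _); apply: eq_has => a; rewrite isblock_eqS.
Qed.

Lemma sfloor_eqS : eqS (sfloor s) (sfloor s').
Proof. by move=> i; rewrite !sgn_at_sfloor in_floor_eqS. Qed.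

Lemma sceil_eqS : eqS (sceil s) (sceil s').
Proof. by move=> i; rewrite !sgn_at_sceil in_ceil_eqS. Qed.

End EqS.

Lemma preceq_nsupp_ge u v :
  (forall x, nsupp_ge (sceil u) x <= nsupp_ge (sfloor v) x) -> preceq u v.
Proof.
move=> H; case: (excluded_middle_informative (eqS u v)) => Huv; first by left.
by right; split=> //; apply/le0P.
Qed.

Unset Implicit Arguments.
Theorem mainTheorem10 (s s' : sseq) :
  Splus s -> Splus s' ->
  (preceq (sfloor s) s /\ preceq s (sceil s)) /\
  (preceq s s' ->
     [/\ preceq (sfloor s) (sfloor s'), preceq (sceil s) (sceil s')
       & dd s <= dd s']).
Proof.
move=> Hs Hs'; split.
  split; apply: preceq_nsupp_ge => x.
    exact: nsupp_ge_sceil_sfloor.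
  exact: nsupp_ge_sfloor.
case=> [Hss' | [_ /le0P Hle]].
  split; [left; exact: sfloor_eqS | left; exact: sceil_eqS |].
  rewrite !dd_nsupp_sfloor //; apply: nsupp_ge_subset => i.
  by rewrite (insupp_eqS (sfloor_eqS Hss')).
split.
- apply: preceq_nsupp_ge => x.
  apply: leq_trans (nsupp_ge_sceil_sfloor s x) _.
  apply: leq_trans (nsupp_ge_floor_ceil s x) _.
  exact: leq_trans (Hle x) (nsupp_ge_sfloor _ x).
- apply: preceq_nsupp_ge => x.
  apply: leq_trans (nsupp_ge_sceil_sceil s x) _.
  apply: leq_trans (Hle x) _.
  exact: leq_trans (nsupp_ge_floor_ceil s' x) (nsupp_ge_sfloor _ x).
- by rewrite !dd_nsupp_sfloor // nsupp_ge0_sfloor_sceil Hle.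
Qed.
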